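(* There exists a $2$-adic fractal string $\mathcal{CS}_2\subseteq\mathbb{Z}_2$ of Minkowski--Bouligand dimension $D=0$ and with oscillatory period $\mathbf{p}=\frac{2\pi}{\log 2}$; that is, its geometric zeta function extends meromorphically to $\mathbb{C}$, its set of poles (complex dimensions) is exactly $\{\frac{2\pi i n}{\log 2}: n\in\mathbb{Z}\}$, and $0$ is the abscissa of convergence of the series defining the geometric zeta function.
   Context: Let $\mathbb{Z}_2$ be the ring of $2$-adic integers with $|2|_2=\frac12$. A $2$-adic fractal string $\mathcal{L}$ in $\mathbb{Z}_2$ is a countable disjoint union of balls $a+2^n\mathbb{Z}_2$ ($a\in\mathbb{Z}_2$, $n\ge1$) contained in $\mathbb{Z}_2$; such a ball has length $2^{-n}$, and $\mathcal{L}$ is encoded by its sequence of lengths $l_j$ counted with multiplicity. Its geometric zeta function is $\zeta_{\mathcal{L}}(s)=\sum_j l_j^s$ for $\Re(s)$ large, meromorphically continued to $\mathbb{C}$ when possible; the complex dimensions are the poles of this continuation; the Minkowski--Bouligand dimension $D$ is the abscissa of convergence of $\sum_j l_j^s$; the oscillatory period is $\mathbf{p}>0$ if the set of complex dimensions is exactly $\{D+in\mathbf{p}:n\in\mathbb{Z}\}$. *)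

From Stdlib Require Import Reals Lra Lia ZArith.
From Coquelicot Require Import Coquelicot.
Open Scope R_scope.

(** 2-adic integers, as a set: Z_2 is identified with the set of 2-adic digit
    expansions x = sum_k x_k 2^k, x_k in {0,1}. *)
Definition Z2 := nat -> bool.

(** The ball a + 2^n Z_2 : all x whose first n 2-adic digits agree with those of a. *)
Definition ball2 (a : Z2) (n : nat) : Z2 -> Prop :=
  fun x => forall k, (k < n)%nat -> x k = a k.

(** A 2-adic fractal string: a countable family of balls a_j + 2^{n_j} Z_2
    (n_j >= 1), indexed by j in nat (None = no ball at index j, which allows
    finite families), pairwise disjoint. *)
Record frac_string2 := {
  fs_ball : nat -> option (Z2 * nat);
  fs_radius_ge1 : forall j a n, fs_ball j = Some (a, n) -> (1 <= n)%nat;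
  fs_disjoint : forall i j a m b n, i <> j ->
      fs_ball i = Some (a, m) -> fs_ball j = Some (b, n) ->
      forall x, ~ (ball2 a m x /\ ball2 b n x)
}.

Definition cexp (z : C) : C :=
  (exp (Re z) * cos (Im z), exp (Re z) * sin (Im z)).

(** l^s for the length l = 2^{-n} of a ball and s complex: exp(-s n log 2). *)
Definition cpow_len (n : nat) (s : C) : C :=
  cexp (Cmult (RtoC (- (INR n * ln 2))) s).

Definition zeta_term (L : frac_string2) (s : C) (j : nat) : C :=
  match fs_ball L j with
  | None => RtoC 0
  | Some (_, n) => cpow_len n s
  end.

Definition zeta_term_real (L : frac_string2) (sigma : R) (j : nat) : R :=
  match fs_ball L j with
  | None => 0
  | Some (_, n) => exp (- (INR n * ln 2) * sigma)
  end.

Definition abscissa (L : frac_string2) (D : R) : Prop :=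
  (forall sigma, D < sigma -> ex_series (zeta_term_real L sigma)) /\
  (forall sigma, sigma < D -> ~ ex_series (zeta_term_real L sigma)).

Definition holo_at (f : C -> C) (z : C) : Prop :=
  @ex_derive C_AbsRing C_NormedModule f z.

Definition is_pole (f : C -> C) (p : C) : Prop :=
  forall M : R, exists delta : R, 0 < delta /\
    forall z : C, 0 < Cmod (Cminus z p) < delta -> M < Cmod (f z).

Definition meromorphic_with_poles (f : C -> C) (P : C -> Prop) : Prop :=
  (forall z : C, exists delta : R, 0 < delta /\
     forall w : C, P w -> 0 < Cmod (Cminus w z) < delta -> False) /\
  (forall z : C, ~ P z -> holo_at f z) /\
  (forall p : C, P p -> is_pole f p).

Definition complex_dimensions (L : frac_string2) (P : C -> Prop) : Prop :=
  exists f : C -> C,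
    (exists sigma0 : R, forall s : C, sigma0 < Re s ->
        is_series (zeta_term L s) (f s)) /\
    meromorphic_with_poles f P.

Definition oscillatory_period (L : frac_string2) (D p : R) : Prop :=
  0 < p /\
  complex_dimensions L (fun z => exists n : Z, z = (D, IZR n * p)).

From Stdlib Require Import Reals ZArith Lra Lia Psatz Classical_Prop.
From Coquelicot Require Import Coquelicot.
Open Scope R_scope.

(* The balls 2^j + 2^(j+1) Z_2 (j >= 0) are pairwise disjoint and the j-th one
   has length 2^-(j+1). So sum_j l_j^sigma is a geometric series of ratio
   2^-sigma, convergent exactly for sigma > 0, and for Re s > 0 the geometric
   zeta function is 1 / (2^s - 1) = 1 / (exp (s ln 2) - 1). This function is
   holomorphic wherever 2^s <> 1, and at the solutions p of 2^s = 1, which form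
   the lattice (2 pi i / ln 2) Z, the denominator vanishes to first order
   (|2^s - 1| ~ ln 2 |s - p|), so these are exactly its poles. *)

Lemma exp_sub_1_sub_bound (a : R) :
  Rabs a <= 1 / 2 -> 0 <= exp a - 1 - a <= 2 * a ^ 2.
Proof.
  intros Ha%Rabs_le_between.
  pose proof (exp_ineq1_le a); pose proof (exp_ineq1_le (- a)); pose proof (exp_pos a).
  assert (exp a * exp (- a) = 1) by (rewrite <- exp_plus, Rplus_opp_r; apply exp_0).
  assert (exp a * (1 - a) <= 1) by nra.
  split; nra.
Qed.

Lemma exp_nat_mul (n : nat) (x : R) : exp (INR n * x) = exp x ^ n.
Proof.
  induction n as [|n IH]; [simpl; rewrite Rmult_0_l; apply exp_0|].
  rewrite S_INR, Rmult_plus_distr_r, Rmult_1_l, exp_plus, IH; simpl; ring.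
Qed.

Lemma Rabs_sin_le (x : R) : Rabs (sin x) <= Rabs x.
Proof.
  assert (Hpos : forall y, 0 <= y -> Rabs (sin y) <= y).
  { intros y Hy. apply Rabs_le. split.
    - destruct (Rle_or_lt y PI).
      + pose proof (sin_ge_0 y Hy H); lra.
      + pose proof (SIN_bound y); pose proof PI2_1; lra.
    - destruct (Req_dec y 0) as [->|]; [rewrite sin_0; lra|].
      left; apply sin_lt_x; lra. }
  destruct (Rle_or_lt 0 x).
  - rewrite (Rabs_right x) by lra; auto.
  - rewrite <- (Rabs_Ropp x), <- Rabs_Ropp, <- sin_neg, (Rabs_right (- x)) by lra.
    apply Hpos; lra.
Qed.

Lemma one_sub_cos_bound (b : R) : 0 <= 1 - cos b <= b ^ 2 / 2.
Proof.
  assert (cos b = 1 - 2 * sin (b / 2) * sin (b / 2))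
    by (rewrite <- cos_2a_sin; f_equal; field).
  pose proof (Rsqr_le_abs_1 _ _ (Rabs_sin_le (b / 2))) as Hs; unfold Rsqr in Hs.
  split; nra.
Qed.

Lemma Rabs_sin_sub_le (b : R) : Rabs b <= PI -> Rabs (sin b - b) <= Rabs b ^ 3 / 6.
Proof.
  assert (Hpos : forall y, 0 <= y <= PI -> Rabs (sin y - y) <= y ^ 3 / 6).
  { intros y Hy. pose proof (sin_bound y 0 (proj1 Hy) (proj2 Hy)) as [Hlo _].
    unfold sin_approx, sin_term in Hlo; simpl in Hlo.
    assert (sin y <= y).
    { destruct (Req_dec y 0) as [->|]; [rewrite sin_0; lra|].
      left; apply sin_lt_x; lra. }
    apply Rabs_le; split; [lra | nra]. }
  intros Hb. destruct (Rle_or_lt 0 b).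
  - rewrite (Rabs_right b) in * by lra; apply Hpos; lra.
  - rewrite (Rabs_left b) in * by lra.
    replace (sin b - b) with (- (sin (- b) - - b)) by (rewrite sin_neg; ring).
    rewrite Rabs_Ropp; apply Hpos; lra.
Qed.

Lemma Rabs_Im_le_Cmod (z : C) : Rabs (Im z) <= Cmod z.
Proof. exact (Rle_trans _ _ _ (Rmax_r _ _) (Rmax_Cmod z)). Qed.

Lemma Cmod_le_Rabs_Re_Im (z : C) : Cmod z <= Rabs (Re z) + Rabs (Im z).
Proof.
  pose proof (Cmod2_alt z); pose proof (Cmod_ge_0 z).
  pose proof (Rabs_pos (Re z)); pose proof (Rabs_pos (Im z)).
  rewrite <- (pow2_abs (Re z)), <- (pow2_abs (Im z)) in H.
  nra.
Qed.

Lemma cexp_add (u v : C) : cexp (u + v) = (cexp u * cexp v)%C.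
Proof.
  destruct u as [a b], v as [a' b']; unfold cexp; simpl.
  rewrite exp_plus, cos_plus, sin_plus.
  apply injective_projections; simpl; ring.
Qed.

Lemma cexp_0 : cexp 0 = 1.
Proof.
  unfold cexp; simpl; rewrite exp_0, cos_0, sin_0.
  apply injective_projections; simpl; ring.
Qed.

Lemma cexp_mul_opp (z : C) : (cexp z * cexp (- z))%C = 1.
Proof. rewrite <- cexp_add, Cplus_opp_r; exact cexp_0. Qed.

Lemma cexp_nat_mul (n : nat) (z : C) : cexp (INR n * z) = (cexp z ^ n)%C.
Proof.
  induction n as [|n IH].
  - rewrite Cmult_0_l; exact cexp_0.
  - rewrite S_INR, RtoC_plus, Cmult_plus_distr_r, Cmult_1_l, cexp_add, IH.
    simpl; apply Cmult_comm.
Qed.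

Lemma Cmod_cexp (z : C) : Cmod (cexp z) = exp (Re z).
Proof.
  destruct z as [a b]; unfold cexp, Cmod; cbn [fst snd Re Im].
  replace ((exp a * cos b) ^ 2 + (exp a * sin b) ^ 2) with (exp a ^ 2).
  - apply sqrt_pow2; left; apply exp_pos.
  - pose proof (sin2_cos2 b) as E; unfold Rsqr in E; nra.
Qed.

Lemma cexp_eq_1 (z : C) : cexp z = 1 <-> exists n : Z, z = (0, 2 * PI * IZR n).
Proof.
  destruct z as [x y]; unfold cexp; simpl; split.
  - intros E; injection E as Ecos Esin.
    pose proof (exp_pos x).
    assert (Hsin : sin y = 0) by nra.
    pose proof (sin2_cos2 y) as E; rewrite Hsin in E; unfold Rsqr in E.
    assert (Hcos : cos y = 1) by nra.
    rewrite Hcos, Rmult_1_r, <- exp_0 in Ecos; apply exp_inv in Ecos; subst x.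
    assert (Hhalf : sin (y / 2) = 0).
    { replace y with (2 * (y / 2)) in Hcos by field; rewrite cos_2a_sin in Hcos; nra. }
    destruct (sin_eq_0_0 _ Hhalf) as [k Hk].
    exists k; f_equal; lra.
  - intros [n E]; injection E as -> ->.
    replace (2 * PI * IZR n) with (2 * (IZR n * PI)) by ring.
    rewrite exp_0, cos_2a_sin, sin_2a, (sin_eq_0_1 (IZR n * PI))
    by (exists n; reflexivity).
    apply injective_projections; simpl; ring.
Qed.

Lemma Cmod_cexp_sub_1_sub_le (h : C) :
  Cmod h <= 1 / 2 -> Cmod (cexp h - 1 - h) <= 4 * Cmod h ^ 2.
Proof.
  intros Hh.
  pose proof (re_le_Cmod h) as Ha; pose proof (Rabs_Im_le_Cmod h) as Hb.
  pose proof (Cmod2_alt h) as Hm.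
  destruct h as [a b]; cbn [Re Im fst snd] in Ha, Hb, Hm; rewrite Hm; clear Hm.
  replace (cexp (a, b) - 1 - (a, b))%C
    with (exp a * cos b - 1 - a, exp a * sin b - b)
    by (unfold cexp; apply injective_projections; simpl; ring).
  eapply Rle_trans; [apply Cmod_le_Rabs_Re_Im|]; cbn [Re Im fst snd].
  pose proof (exp_sub_1_sub_bound a ltac:(lra)) as Ea.
  pose proof (one_sub_cos_bound b) as Cb.
  pose proof (Rabs_sin_sub_le b ltac:(pose proof PI2_1; lra)) as Sb.
  pose proof (Rabs_sin_le b) as Sb'.
  pose proof (exp_pos a).
  apply Rabs_le_between in Ha.
  assert (exp a <= 2) by nra.
  assert (Hb2 : Rabs b ^ 3 / 6 <= b ^ 2)
    by (rewrite <- (pow2_abs b); pose proof (Rabs_pos b); nra).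
  assert (Hre : Rabs (exp a * cos b - 1 - a) <= 2 * a ^ 2 + b ^ 2).
  { replace (exp a * cos b - 1 - a) with ((exp a - 1 - a) - exp a * (1 - cos b)) by ring.
    assert (exp a * (1 - cos b) <= b ^ 2) by nra.
    apply Rabs_le; split; nra. }
  assert (Hexp : Rabs (exp a - 1) <= 2 * Rabs a).
  { apply Rabs_le.
    destruct (Rle_or_lt 0 a); [rewrite Rabs_right | rewrite Rabs_left]; try split; nra. }
  assert (Him : Rabs (exp a * sin b - b) <= a ^ 2 + 2 * b ^ 2).
  { replace (exp a * sin b - b) with ((exp a - 1) * sin b + (sin b - b)) by ring.
    eapply Rle_trans; [apply Rabs_triang|]; rewrite Rabs_mult.
    pose proof (Rabs_pos (exp a - 1)); pose proof (Rabs_pos (sin b)).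
    pose proof (pow2_ge_0 (Rabs a - Rabs b)).
    rewrite <- (pow2_abs a), <- (pow2_abs b) in *.
    nra. }
  lra.
Qed.

Lemma Cmod_cexp_sub_1_bounds (h : C) :
  Cmod h <= 1 / 8 -> Cmod h / 2 <= Cmod (cexp h - 1) <= 2 * Cmod h.
Proof.
  intros Hh.
  pose proof (Cmod_cexp_sub_1_sub_le h ltac:(lra)) as Hr; pose proof (Cmod_ge_0 h).
  pose proof (Cmod_triangle (cexp h - 1 - h) h) as Hup.
  pose proof (Cmod_triangle (cexp h - 1) (- (cexp h - 1 - h))) as Hlo.
  rewrite Cmod_opp in Hlo.
  replace (cexp h - 1 - h + h)%C with (cexp h - 1)%C in Hup by ring.
  replace (cexp h - 1 + - (cexp h - 1 - h))%C with h in Hlo by ring.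
  split; nra.
Qed.

(* [C] as a normed module over itself. [C_NormedModule] has the same norm but a
   different (product) uniform structure, so the two notions of derivative are
   not convertible. *)
Local Notation C_self := (AbsRing_NormedModule C_AbsRing).

Lemma is_derive_of_quadratic_remainder (f : C -> C) (x l : C) (r K : R) :
  0 < r ->
  (forall y, Cmod (y - x) < r -> Cmod (f y - f x - (y - x) * l) <= K * Cmod (y - x) ^ 2) ->
  @is_derive C_AbsRing C_self f x l.
Proof.
  intros Hr HK; split; [apply is_linear_scal_l|].
  intros x' Hx'.
  pose proof (@is_filter_lim_locally_unique _ C_self x x' Hx') as <-.
  intros eps; apply (locally_le_locally_norm (K := C_AbsRing) (V := C_self) x).
  pose proof (Rabs_pos K) as HK0; pose proof (cond_pos eps) as He.
  assert (Hd : 0 < Rmin r (eps / (Rabs K + 1)))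
    by (apply Rmin_pos; [lra | apply Rdiv_lt_0_compat; lra]).
  exists (mkposreal _ Hd); intros y Hy; unfold ball_norm in Hy; simpl in Hy.
  change (Cmod (f y - f x - (y - x) * l) <= eps * Cmod (y - x)).
  change (Cmod (y - x) < Rmin r (eps / (Rabs K + 1))) in Hy.
  pose proof (Rmin_l r (eps / (Rabs K + 1))); pose proof (Rmin_r r (eps / (Rabs K + 1))).
  pose proof (Cmod_ge_0 (y - x)); pose proof (Rle_abs K).
  assert (Cmod (y - x) * (Rabs K + 1) <= eps).
  { apply (Rmult_le_reg_r (/ (Rabs K + 1))); [apply Rinv_0_lt_compat; lra|].
    rewrite Rmult_assoc, Rinv_r by lra; lra. }
  eapply Rle_trans; [apply HK; lra | nra].
Qed.

Lemma ex_derive_C_NormedModule (f : C -> C) (x : C) :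
  @ex_derive C_AbsRing C_self f x -> @ex_derive C_AbsRing C_NormedModule f x.
Proof.
  intros [l [_ Hdom]]; exists l; split; [apply is_linear_scal_l | exact Hdom].
Qed.

Lemma ex_derive_Cmult_l (a z : C) : @ex_derive C_AbsRing C_self (fun s => a * s)%C z.
Proof.
  apply (ex_derive_ext (V := C_self) (fun s => scal s a)); [intros; apply Cmult_comm|].
  apply (ex_derive_scal_l (V := C_self)), ex_derive_id.
Qed.

Lemma is_derive_cexp (z : C) : @is_derive C_AbsRing C_self cexp z (cexp z).
Proof.
  apply (is_derive_of_quadratic_remainder _ _ _ (1 / 2) (4 * exp (Re z))); [lra|].
  intros y Hy.
  replace (cexp y) with (cexp z * cexp (y - z))%C by (rewrite <- cexp_add; f_equal; ring).
  replace (cexp z * cexp (y - z) - cexp z - (y - z) * cexp z)%C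
    with (cexp z * (cexp (y - z) - 1 - (y - z)))%C by ring.
  rewrite Cmod_mult, Cmod_cexp.
  pose proof (Cmod_cexp_sub_1_sub_le (y - z) ltac:(lra)); pose proof (exp_pos (Re z)).
  nra.
Qed.

Lemma is_derive_Cinv (z : C) :
  z <> 0 -> @is_derive C_AbsRing C_self Cinv z (- / (z * z))%C.
Proof.
  intros Hz; assert (Hm : 0 < Cmod z) by (apply Cmod_gt_0; exact Hz).
  apply (is_derive_of_quadratic_remainder _ _ _ (Cmod z / 2) (2 / Cmod z ^ 3)); [lra|].
  intros y Hy.
  assert (Hyz : Cmod z / 2 <= Cmod y).
  { pose proof (Cmod_triangle y (- (y - z))) as T; rewrite Cmod_opp in T.
    replace (y + - (y - z))%C with z in T by ring; lra. }
  assert (Hy0 : y <> 0) by (intros ->; rewrite Cmod_0 in Hyz; lra).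
  replace (/ y - / z - (y - z) * - / (z * z))%C
    with ((y - z) * (y - z) * / (z * z * y))%C by (field; auto).
  rewrite !Cmod_mult, Cmod_inv by (repeat apply Cmult_neq_0; auto).
  rewrite !Cmod_mult.
  assert (Hinv : / (Cmod z * Cmod z * Cmod y) <= 2 / Cmod z ^ 3).
  { replace (2 / Cmod z ^ 3) with (/ (Cmod z * Cmod z * (Cmod z / 2))) by (field; lra).
    apply Rinv_le_contravar; [repeat apply Rmult_lt_0_compat; lra|].
    apply Rmult_le_compat_l; nra. }
  pose proof (Cmod_ge_0 (y - z)); nra.
Qed.

Lemma is_series_Cgeom (w : C) :
  Cmod w < 1 -> is_series (fun n => w ^ n)%C (/ (1 - w))%C.
Proof.
  intros Hw.
  assert (Hw1 : (1 - w)%C <> 0).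
  { intros E; assert (w = 1)%C as ->
      by (replace w with (1 - (1 - w))%C by ring; rewrite E; ring).
    rewrite Cmod_1 in Hw; lra. }
  assert (Hm : 0 < Cmod (1 - w)) by (apply Cmod_gt_0; exact Hw1).
  assert (Hsum : forall n, sum_n (fun k => w ^ k)%C n = (/ (1 - w) - w ^ S n / (1 - w))%C).
  { induction n as [|n IH].
    - rewrite sum_O; simpl; field; exact Hw1.
    - rewrite sum_Sn, IH; change plus with Cplus; simpl; field; exact Hw1. }
  apply (filterlim_locally_ball_norm (K := C_AbsRing)); intros eps.
  pose proof (Cmod_ge_0 w).
  destruct (pow_lt_1_zero (Cmod w) ltac:(rewrite Rabs_right; lra) (eps * Cmod (1 - w)))
    as [N HN]; [apply Rmult_lt_0_compat; [apply cond_pos | exact Hm]|].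
  exists N; intros n Hn; unfold ball_norm.
  change (Cmod (sum_n (fun k => w ^ k)%C n - / (1 - w)) < eps).
  rewrite Hsum.
  replace (/ (1 - w) - w ^ S n / (1 - w) - / (1 - w))%C with (- (w ^ S n / (1 - w)))%C by ring.
  rewrite Cmod_opp, Cmod_div, Cmod_pow by exact Hw1.
  specialize (HN (S n) ltac:(lia)); rewrite Rabs_right in HN by (apply Rle_ge, pow_le; lra).
  apply (Rmult_lt_reg_r (Cmod (1 - w))); [exact Hm|].
  unfold Rdiv; rewrite Rmult_assoc, Rinv_l; lra.
Qed.

Definition imag_lattice (p : R) (z : C) : Prop := exists n : Z, z = (0, IZR n * p).

Lemma imag_lattice_separated (p : R) (w1 w2 : C) :
  0 < p -> imag_lattice p w1 -> imag_lattice p w2 -> w1 <> w2 -> p <= Cmod (w1 - w2).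
Proof.
  intros Hp [n1 ->] [n2 ->] Hne.
  assert (Hn : (n1 <> n2)%Z) by (intros ->; apply Hne; reflexivity).
  eapply Rle_trans; [|apply Rabs_Im_le_Cmod]; simpl.
  replace (IZR n1 * p + - (IZR n2 * p)) with (IZR (n1 - n2) * p)
    by (rewrite minus_IZR; ring).
  rewrite Rabs_mult, (Rabs_right p), <- abs_IZR by lra.
  assert (1 <= IZR (Z.abs (n1 - n2))) by (apply IZR_le; lia).
  nra.
Qed.

Lemma isolated_of_separated (P : C -> Prop) (p : R) :
  0 < p ->
  (forall w1 w2, P w1 -> P w2 -> w1 <> w2 -> p <= Cmod (w1 - w2)) ->
  forall z, exists delta, 0 < delta /\ forall w, P w -> 0 < Cmod (w - z) < delta -> False.
Proof.
  intros Hp Hsep z.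
  destruct (classic (exists w0, P w0 /\ 0 < Cmod (w0 - z) < p / 2))
    as [[w0 [Hw0 Hd0]] | Hnone].
  - exists (Cmod (w0 - z)); split; [lra|].
    intros w Hw Hd.
    assert (w <> w0) by (intros ->; lra).
    pose proof (Hsep w w0 Hw Hw0 H).
    pose proof (Cmod_triangle (w - z) (- (w0 - z))) as T; rewrite Cmod_opp in T.
    replace (w - z + - (w0 - z))%C with (w - w0)%C in T by ring.
    lra.
  - exists (p / 2); split; [lra|].
    intros w Hw Hd; apply Hnone; eauto.
Qed.

Lemma is_pole_Cinv (g : C -> C) (p : C) (r k : R) :
  0 < r -> 0 < k ->
  (forall z, 0 < Cmod (z - p) < r -> g z <> 0 /\ Cmod (g z) <= k * Cmod (z - p)) ->
  is_pole (fun z => / g z)%C p.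
Proof.
  intros Hr Hk Hg M.
  pose proof (Rabs_pos M); pose proof (Rle_abs M).
  assert (Hd : 0 < / (k * (Rabs M + 1))) by (apply Rinv_0_lt_compat; nra).
  exists (Rmin r (/ (k * (Rabs M + 1)))); split; [apply Rmin_pos; lra|].
  intros z [Hz1 Hz2].
  pose proof (Rmin_l r (/ (k * (Rabs M + 1)))); pose proof (Rmin_r r (/ (k * (Rabs M + 1)))).
  destruct (Hg z ltac:(lra)) as [Hg0 Hgle].
  assert (Hgpos : 0 < Cmod (g z)) by (apply Cmod_gt_0; exact Hg0).
  rewrite Cmod_inv by exact Hg0.
  assert (Hzk : Cmod (z - p) * (k * (Rabs M + 1))
                < / (k * (Rabs M + 1)) * (k * (Rabs M + 1)))
    by (apply Rmult_lt_compat_r; nra).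
  rewrite Rinv_l in Hzk by nra.
  apply (Rmult_lt_reg_l (Cmod (g z))); [exact Hgpos|].
  rewrite Rinv_r by lra; nra.
Qed.

Section InvCexpSub1.

Variable c : R.
Hypothesis c_pos : 0 < c.

Definition inv_cexp_sub_1 (s : C) : C := / (cexp (RtoC c * s) - 1).

Let period := 2 * PI / c.

Lemma period_pos : 0 < period.
Proof. unfold period; apply Rdiv_lt_0_compat; [pose proof PI_RGT_0 |]; lra. Qed.

Lemma cexp_scal_eq_1 (z : C) : cexp (RtoC c * z) = 1 <-> imag_lattice period z.
Proof.
  rewrite cexp_eq_1; destruct z as [x y]; unfold imag_lattice, period; split.
  - intros [n E]; exists n; injection E as E1 E2.
    f_equal; [nra | field_simplify_eq; lra].
  - intros [n E]; exists n; injection E as -> ->.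
    apply injective_projections; simpl; field; lra.
Qed.

Lemma holo_at_inv_cexp_sub_1 (z : C) :
  ~ imag_lattice period z -> holo_at inv_cexp_sub_1 z.
Proof.
  intros Hz; apply ex_derive_C_NormedModule; unfold inv_cexp_sub_1.
  assert (Hne : (cexp (RtoC c * z) - 1)%C <> 0).
  { intros E; apply Hz, cexp_scal_eq_1.
    replace (cexp (RtoC c * z)) with (cexp (RtoC c * z) - 1 + 1)%C by ring.
    rewrite E; ring. }
  apply (ex_derive_comp (V := C_self) Cinv (fun s => cexp (RtoC c * s) - 1)%C).
  - exists (- / ((cexp (RtoC c * z) - 1) * (cexp (RtoC c * z) - 1)))%C.
    now apply is_derive_Cinv.
  - apply (ex_derive_ext (V := C_self) (fun s => minus (cexp (RtoC c * s)) (RtoC 1)));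
      [intros; reflexivity|].
    apply (ex_derive_minus (V := C_self) (fun s => cexp (RtoC c * s)) (fun _ => RtoC 1)).
    2: exact (ex_derive_const (V := C_self) (RtoC 1) z).
    exact (ex_derive_comp (V := C_self) cexp (fun s => RtoC c * s)%C z
             (ex_intro _ _ (is_derive_cexp _)) (ex_derive_Cmult_l _ z)).
Qed.

Lemma is_pole_inv_cexp_sub_1 (p : C) :
  imag_lattice period p -> is_pole inv_cexp_sub_1 p.
Proof.
  intros Hp%cexp_scal_eq_1.
  apply (is_pole_Cinv _ p (1 / (8 * c)) (2 * c)); [apply Rdiv_lt_0_compat; lra | lra|].
  intros z [Hz1 Hz2].
  replace (cexp (RtoC c * z)) with (cexp (RtoC c * (z - p)))
    by (rewrite <- (Cmult_1_l (cexp _)), <- Hp, <- cexp_add; f_equal; ring).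
  assert (Hh : Cmod (RtoC c * (z - p)) = c * Cmod (z - p))
    by (rewrite Cmod_mult, Cmod_R, Rabs_right; lra).
  assert (Hh8 : Cmod (RtoC c * (z - p)) <= 1 / 8).
  { rewrite Hh; apply (Rmult_lt_compat_l c) in Hz2; [|lra].
    replace (c * (1 / (8 * c))) with (1 / 8) in Hz2 by (field; lra); lra. }
  pose proof (Cmod_cexp_sub_1_bounds _ Hh8) as [Hlo Hup]; rewrite Hh in Hlo, Hup.
  split; [|lra].
  intros E; rewrite E, Cmod_0 in Hlo; nra.
Qed.

Lemma meromorphic_inv_cexp_sub_1 :
  meromorphic_with_poles inv_cexp_sub_1 (imag_lattice period).
Proof.
  split; [|split].
  - apply (isolated_of_separated _ period period_pos).
    intros; apply imag_lattice_separated; auto using period_pos.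
  - exact holo_at_inv_cexp_sub_1.
  - exact is_pole_inv_cexp_sub_1.
Qed.

End InvCexpSub1.

(* [fun k => k =? j] is the digit expansion of the 2-adic integer 2^j. *)
Definition CS2_ball (j : nat) : option (Z2 * nat) := Some (fun k => Nat.eqb k j, S j).

Lemma CS2_radius_ge1 (j : nat) (a : Z2) (n : nat) :
  CS2_ball j = Some (a, n) -> (1 <= n)%nat.
Proof. intros H; injection H as _ <-; lia. Qed.

Lemma CS2_disjoint (i j : nat) (a : Z2) (m : nat) (b : Z2) (n : nat) :
  i <> j -> CS2_ball i = Some (a, m) -> CS2_ball j = Some (b, n) ->
  forall x, ~ (ball2 a m x /\ ball2 b n x).
Proof.
  intros Hij Hi Hj x [Hx1 Hx2].
  injection Hi as <- <-; injection Hj as <- <-.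
  destruct (Nat.lt_ge_cases i j) as [Hlt | Hge].
  - specialize (Hx1 i ltac:(lia)); specialize (Hx2 i ltac:(lia)).
    rewrite Hx1, Nat.eqb_refl in Hx2; symmetry in Hx2; apply Nat.eqb_eq in Hx2; lia.
  - specialize (Hx1 j ltac:(lia)); specialize (Hx2 j ltac:(lia)).
    rewrite Hx2, Nat.eqb_refl in Hx1; symmetry in Hx1; apply Nat.eqb_eq in Hx1; lia.
Qed.

Definition CS2 : frac_string2 :=
  {| fs_ball := CS2_ball; fs_radius_ge1 := CS2_radius_ge1; fs_disjoint := CS2_disjoint |}.

Lemma zeta_term_real_CS2 (sigma : R) (j : nat) :
  zeta_term_real CS2 sigma j = exp (- ln 2 * sigma) ^ S j.
Proof.
  change (exp (- (INR (S j) * ln 2) * sigma) = exp (- ln 2 * sigma) ^ S j).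
  rewrite <- exp_nat_mul; f_equal; ring.
Qed.

Lemma zeta_term_CS2 (s : C) (j : nat) :
  zeta_term CS2 s j = (cexp (RtoC (- ln 2) * s) ^ S j)%C.
Proof.
  change (cpow_len (S j) s = (cexp (RtoC (- ln 2) * s) ^ S j)%C).
  unfold cpow_len; rewrite <- cexp_nat_mul; f_equal.
  rewrite RtoC_opp, RtoC_mult, RtoC_opp; ring.
Qed.

Lemma ln2_pos : 0 < ln 2.
Proof. pose proof ln_lt_2; lra. Qed.

Lemma abscissa_CS2 : abscissa CS2 0.
Proof.
  pose proof ln2_pos; split; intros sigma Hsigma.
  - assert (Hq : 0 < exp (- ln 2 * sigma) < 1)
      by (split; [apply exp_pos | rewrite <- exp_0; apply exp_increasing; nra]).
    apply (ex_series_ext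
             (fun j => scal (exp (- ln 2 * sigma)) (exp (- ln 2 * sigma) ^ j))).
    + intros j; rewrite zeta_term_real_CS2; reflexivity.
    + apply (ex_series_scal_l (V := R_NormedModule)), ex_series_geom.
      rewrite Rabs_right; lra.
  - intros Hex%ex_series_lim_0.
    assert (Hq : 1 < exp (- ln 2 * sigma)) by (rewrite <- exp_0; apply exp_increasing; nra).
    assert (Hle : Rbar_le 1 0).
    { apply (is_lim_seq_le (fun _ => 1) (zeta_term_real CS2 sigma));
        [|apply is_lim_seq_const | exact Hex].
      intros j; rewrite zeta_term_real_CS2; apply pow_R1_Rle; lra. }
    simpl in Hle; lra.
Qed.

Lemma is_series_zeta_CS2 (s : C) :
  0 < Re s -> is_series (zeta_term CS2 s) (inv_cexp_sub_1 (ln 2) s).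
Proof.
  intros Hs; pose proof ln2_pos.
  set (w := cexp (RtoC (- ln 2) * s)).
  set (u := cexp (RtoC (ln 2) * s)).
  assert (Hw : Cmod w < 1).
  { unfold w; rewrite Cmod_cexp, <- exp_0; apply exp_increasing.
    destruct s as [x y]; simpl in *; nra. }
  assert (Huw : (u * w)%C = 1).
  { unfold u, w; replace (RtoC (- ln 2) * s)%C with (- (RtoC (ln 2) * s))%C
      by (rewrite RtoC_opp; ring).
    apply cexp_mul_opp. }
  assert (Hu0 : u <> 0)
    by (intros E; rewrite E, Cmult_0_l in Huw; apply RtoC_inj in Huw; lra).
  assert (Hu1 : (u - 1)%C <> 0).
  { intros E; assert (u = 1)%C as Hu
      by (replace u with (u - 1 + 1)%C by ring; rewrite E; ring).
    rewrite Hu, Cmult_1_l in Huw; rewrite Huw, Cmod_1 in Hw; lra. }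
  assert (Hwu : w = (/ u)%C)
    by (replace w with (/ u * (u * w))%C by (field; exact Hu0); rewrite Huw; ring).
  apply (is_series_ext (fun j => scal w (w ^ j)%C));
    [intros j; rewrite zeta_term_CS2; reflexivity|].
  replace (inv_cexp_sub_1 (ln 2) s) with (scal w (/ (1 - w)))%C.
  { apply (is_series_scal_l (V := C_NormedModule)), is_series_Cgeom, Hw. }
  unfold inv_cexp_sub_1; fold u; change (w * / (1 - w) = / (u - 1))%C.
  rewrite Hwu; field; split; auto.
Qed.

Theorem lemma4p1 :
  exists CS2 : frac_string2,
    abscissa CS2 0 /\ oscillatory_period CS2 0 (2 * PI / ln 2).
Proof.
  exists CS2; split; [exact abscissa_CS2|].
  split; [exact (period_pos (ln 2) ln2_pos)|].
  exists (inv_cexp_sub_1 (ln 2)); split.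
  - exists 0; exact is_series_zeta_CS2.
  - exact (meromorphic_inv_cexp_sub_1 (ln 2) ln2_pos).
Qed.
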